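(* Let $T$ and $P$ be countably infinite sets and $R_{T.P}=\mathbf{R}^{(T^P)}=\prod_{p\in P}\mathbf{R}^T$. Let $\mathbf{L}:\prod_{p\in P}\bar{\mathbf{R}}^T\to\mathcal{N}(P)$ be any function; for each $p\in P$ let $L^p:\bar{\mathbf{R}}^T\to\mathcal{N}(T)$ be any function, and for each $t\in T$, $p\in P$ let $\delta^p_t:\bar{\mathbf{R}}\to\,]0,\infty[$ be a gauge in $\mathbf{R}$; put $\gamma^p=(L^p,\{\delta^p_t\}_{t\in T})$ and $\gamma=(\mathbf{L},\{\gamma^p\}_{p\in P},\{\delta^p_t\}_{t\in T,p\in P})$. Then there exists a $\gamma$-fine division of $R_{T.P}$.
   Context: $\mathcal{N}(X)$ is the family of finite subsets of a set $X$. A cell of $\mathbf{R}$ is $]u,v]$ ($u<v$ real), $]-\infty,v]$, or $]u,\infty[$; $y\in\bar{\mathbf{R}}=[-\infty,\infty]$ is associated with $I$ if $y$ is a vertex of $I$; for a gauge $\delta$ in $\mathbf{R}$, an associated $(y,I)$ is $\delta$-fine if: $I$ bounded and $|I|<\delta(y)$; or $y=-\infty$, $I=\,]-\infty,v]$, $v<-1/\delta(y)$; or $y=+\infty$, $I=\,]u,\infty[$, $u>1/\delta(y)$. Points of $R_{T.P}$ are $\mathbf{x}=((x^p_t)_{t\in T})_{p\in P}$, with tags in $\prod_{p}\bar{\mathbf{R}}^T$; write $x^p_T=(x^p_t)_{t\in T}$. A cell of $R_{T.P}$ is $\mathbf{I}=\prod_{p\in N_P}\big(\prod_{t\in N^p_T}I^p_t\times\mathbf{R}^{T\setminus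 N^p_T}\big)\times\prod_{p\in P\setminus N_P}\mathbf{R}^T$, where $N_P\in\mathcal{N}(P)$, for each $p\in N_P$ a set $N^p_T\in\mathcal{N}(T)$ is chosen, and each $I^p_t$ is a cell of $\mathbf{R}$. $(\mathbf{x},\mathbf{I})$ is associated if $x^p_t$ is a vertex of $I^p_t$ for all $p\in N_P$, $t\in N^p_T$. It is $\gamma$-fine if (1) $N_P\supseteq\mathbf{L}(\mathbf{x})$, (2) $N^p_T\supseteq L^p(x^p_T)$ for each $p\in N_P$, and (3) $(x^p_t,I^p_t)$ is $\delta^p_t$-fine for every $p\in N_P$ and $t\in N^p_T$. A division of $R_{T.P}$ is a finite collection of associated pairs whose cells are pairwise disjoint with union $R_{T.P}$; it is $\gamma$-fine if every pair is. *)

From Stdlib Require Import Reals List.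
Import ListNotations.
Open Scope R_scope.

Inductive Rbar : Type := Fin (r : R) | PInf | NInf.

(* Cells of R: ]u,v] (u<v), ]-oo,v], ]u,+oo[. *)
Inductive cellR : Type :=
  | Ioc (u v : R)
  | Iinf (v : R)
  | Isup (u : R).

Definition cellR_ok (I : cellR) : Prop :=
  match I with Ioc u v => u < v | _ => True end.

Definition in_cellR (r : R) (I : cellR) : Prop :=
  match I with
  | Ioc u v => u < r /\ r <= v
  | Iinf v => r <= v
  | Isup u => u < r
  end.

Definition vertexR (y : Rbar) (I : cellR) : Prop :=
  match I with
  | Ioc u v => y = Fin u \/ y = Fin v
  | Iinf v => y = NInf \/ y = Fin v
  | Isup u => y = Fin u \/ y = PInf
  end.

Definition fineR (delta : Rbar -> R) (y : Rbar) (I : cellR) : Prop :=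
  match I with
  | Ioc u v => v - u < delta y
  | Iinf v => y = NInf /\ v < - / delta y
  | Isup u => y = PInf /\ u > / delta y
  end.

(* Cells of R_{T.P} = prod_{p in P} R^T :
   I = prod_{p in NP} (prod_{t in NT p} Ic p t x R^{T \ NT p}) x prod_{p notin NP} R^T. *)
Record cellTP (T P : Type) : Type := mkCellTP {
  cNP : list P;
  cNT : P -> list T;
  cI  : P -> T -> cellR
}.
Arguments cNP {T P}. Arguments cNT {T P}. Arguments cI {T P}.

Definition cellTP_ok {T P} (I : cellTP T P) : Prop :=
  forall p t, In p (cNP I) -> In t (cNT I p) -> cellR_ok (cI I p t).

Definition in_cellTP {T P} (x : P -> T -> R) (I : cellTP T P) : Prop :=
  forall p t, In p (cNP I) -> In t (cNT I p) -> in_cellR (x p t) (cI I p t).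

Definition assocTP {T P} (x : P -> T -> Rbar) (I : cellTP T P) : Prop :=
  forall p t, In p (cNP I) -> In t (cNT I p) -> vertexR (x p t) (cI I p t).

Definition gamma_fine {T P}
    (L : (P -> T -> Rbar) -> list P)
    (Lp : P -> (T -> Rbar) -> list T)
    (delta : P -> T -> Rbar -> R)
    (x : P -> T -> Rbar) (I : cellTP T P) : Prop :=
  incl (L x) (cNP I) /\
  (forall p, In p (cNP I) -> incl (Lp p (x p)) (cNT I p)) /\
  (forall p t, In p (cNP I) -> In t (cNT I p) -> fineR (delta p t) (x p t) (cI I p t)).

Definition divisionTP {T P} (D : list ((P -> T -> Rbar) * cellTP T P)) : Prop :=
  (forall xI, In xI D -> cellTP_ok (snd xI) /\ assocTP (fst xI) (snd xI)) /\
  (forall i j, (i < length D)%nat -> (j < length D)%nat -> i <> j ->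
     forall d (z : P -> T -> R),
       in_cellTP z (snd (nth i D d)) -> in_cellTP z (snd (nth j D d)) -> False) /\
  (forall z : P -> T -> R, exists xI, In xI D /\ in_cellTP z (snd xI)).

Definition countably_infinite (X : Type) : Prop :=
  exists f : nat -> X, (forall a b, f a = f b -> a = b) /\ (forall x, exists n, f n = x).

(* On the line, Cousin's lemma follows
   from a supremum argument.  A product of countably many factors, each of which
   admits fine divisions, is handled by a Koenig-type argument: if the whole
   space had no fine division, one could choose, coordinate after coordinate, a
   cell of a fixed division of that coordinate so that every finite
   intersection is still not divisible; but the finitely many coordinates
   demanded by the gauge at the resulting tag are exhausted at some finite
   stage, where that intersection is itself a single fine cell.  Applying the
   product step to R^T and then to (R^T)^P gives the theorem. *)
From Stdlib Require Import Reals List Lra Lia Classical ClassicalEpsilon.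
Import ListNotations.
Open Scope R_scope.

Lemma ForallOrdPairs_impl {A} (R1 R2 : A -> A -> Prop) (l : list A) :
  (forall a b, R1 a b -> R2 a b) -> ForallOrdPairs R1 l -> ForallOrdPairs R2 l.
Proof.
  intros H12 Hl; induction Hl as [|a l Ha Hl IH]; constructor; auto.
  exact (Forall_impl _ (H12 a) Ha).
Qed.

Lemma ForallOrdPairs_app {A} (R : A -> A -> Prop) (l1 l2 : list A) :
  ForallOrdPairs R l1 -> ForallOrdPairs R l2 ->
  (forall a b, In a l1 -> In b l2 -> R a b) -> ForallOrdPairs R (l1 ++ l2).
Proof.
  induction 1 as [|a l1 Ha Hl1 IH]; intros Hl2 Hcross; simpl; auto.
  constructor.
  - apply Forall_app; split; auto.
    apply Forall_forall; intros b Hb; apply Hcross; simpl; auto.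
  - apply IH; auto. intros; apply Hcross; simpl; auto.
Qed.

Lemma ForallOrdPairs_nth {A} (R : A -> A -> Prop) (l : list A) (d : A) :
  (forall a b, R a b -> R b a) -> ForallOrdPairs R l ->
  forall i j, (i < length l)%nat -> (j < length l)%nat -> i <> j ->
  R (nth i l d) (nth j l d).
Proof.
  intros Hsym Hl; induction Hl as [|a l Ha Hl IH]; intros i j Hi Hj Hij;
    simpl in *; [lia|].
  rewrite Forall_forall in Ha.
  destruct i as [|i], j as [|j]; [lia| | |apply IH; lia].
  - apply Ha, nth_In; lia.
  - apply Hsym, Ha, nth_In; lia.
Qed.

Lemma le_list_max {A} (g : A -> nat) (l : list A) (x : A) :
  In x l -> (g x <= list_max (map g l))%nat.
Proof.
  intros Hx.
  pose proof (proj1 (list_max_le (map g l) _) (le_n _)) as Hle.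
  rewrite Forall_forall in Hle. apply Hle, in_map, Hx.
Qed.

Lemma countably_infinite_enum (X : Type) : countably_infinite X ->
  exists (f : nat -> X) (g : X -> nat),
    (forall x, f (g x) = x) /\ (forall k, g (f k) = k).
Proof.
  intros [f [f_inj f_surj]].
  destruct (choice (fun x k => f k = x) f_surj) as [g fK].
  exists f, g; split; [exact fK|intros k; apply f_inj, fK].
Qed.

Section Divisions.
Variables (Z C : Type) (inC : Z -> C -> Prop) (okC : C -> Prop).

Definition disjoint_cells (a b : C) : Prop := forall z, inC z a -> inC z b -> False.

Definition divisible (Rg : Z -> Prop) : Prop :=
  exists D : list C, (forall c, In c D -> okC c) /\
    ForallOrdPairs disjoint_cells D /\
    (forall z, Rg z <-> exists c, In c D /\ inC z c).

Lemma divisible_ext (R1 R2 : Z -> Prop) :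
  (forall z, R1 z <-> R2 z) -> divisible R1 -> divisible R2.
Proof.
  intros H12 [D [Hok [Hdisj Hcov]]].
  exists D; split; [exact Hok|split; [exact Hdisj|]].
  intros z; rewrite <- H12; apply Hcov.
Qed.

Lemma divisible_empty : divisible (fun _ => False).
Proof.
  exists []; split; [intros c []|split; [constructor|]].
  intros z; split; [intros []|intros [c [[] _]]].
Qed.

Lemma divisible_cell (c : C) : okC c -> divisible (fun z => inC z c).
Proof.
  intros Hc; exists [c]; split; [intros c' [<-|[]]; exact Hc|split].
  - repeat constructor.
  - intros z; split; [intros Hz; exists c; simpl; auto|intros [c' [[<-|[]] Hz]]; exact Hz].
Qed.

Lemma divisible_union (A B : Z -> Prop) :
  divisible A -> divisible B -> (forall z, A z -> B z -> False) ->
  divisible (fun z => A z \/ B z).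
Proof.
  intros [D1 [Hok1 [Hdisj1 Hcov1]]] [D2 [Hok2 [Hdisj2 Hcov2]]] HAB.
  exists (D1 ++ D2); split; [|split].
  - intros c Hc; apply in_app_or in Hc as [Hc|Hc]; auto.
  - apply ForallOrdPairs_app; auto.
    intros a b Ha Hb z Hza Hzb.
    apply (HAB z); [apply Hcov1|apply Hcov2]; eauto.
  - intros z; split.
    + intros [Hz|Hz]; [apply Hcov1 in Hz|apply Hcov2 in Hz];
        destruct Hz as [c [Hc Hz]]; exists c; split; auto; apply in_or_app; auto.
    + intros [c [Hc Hz]]; apply in_app_or in Hc as [Hc|Hc];
        [left; apply Hcov1|right; apply Hcov2]; eauto.
Qed.

Lemma divisible_split {A} (reg : A -> Z -> Prop) (l : list A) (Rg : Z -> Prop) :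
  ForallOrdPairs (fun a b => forall z, reg a z -> reg b z -> False) l ->
  (forall z, exists a, In a l /\ reg a z) ->
  (forall a, In a l -> divisible (fun z => Rg z /\ reg a z)) -> divisible Rg.
Proof.
  intros Hdisj Hcov Hpieces.
  enough (Hl : divisible (fun z => Rg z /\ exists a, In a l /\ reg a z)).
  { revert Hl; apply divisible_ext; intros z; split; [tauto|split; auto]. }
  clear Hcov; induction Hdisj as [|a l Ha Hl IH].
  - apply (divisible_ext (fun _ => False)); [|exact divisible_empty].
    intros z; split; [tauto|intros [_ [a [[] _]]]].
  - apply (divisible_ext (fun z => (Rg z /\ reg a z) \/
                                   (Rg z /\ exists b, In b l /\ reg b z))).
    + intros z; simpl; split.
      * intros [[HR Hz]|[HR [b [Hb Hz]]]]; eauto.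
      * intros [HR [b [[<-|Hb] Hz]]]; eauto.
    + rewrite Forall_forall in Ha.
      apply divisible_union.
      * apply Hpieces; simpl; auto.
      * apply IH; intros; apply Hpieces; simpl; auto.
      * intros z [_ Hza] [_ [b [Hb Hzb]]]; exact (Ha b Hb z Hza Hzb).
Qed.

Lemma koenig_divisible {A} (pieces : nat -> list A) (reg : nat -> A -> Z -> Prop) :
  (forall k, ForallOrdPairs (fun a b => forall z, reg k a z -> reg k b z -> False)
                            (pieces k)) ->
  (forall k z, exists a, In a (pieces k) /\ reg k a z) ->
  (forall c : nat -> A, (forall k, In (c k) (pieces k)) ->
     exists m, divisible (fun z => forall k, (k < m)%nat -> reg k (c k) z)) ->
  divisible (fun _ => True).
Proof.
  intros Hdisj Hcov Hbranch; apply NNPP; intros Hbad.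
  assert (HA : inhabited A).
  { apply NNPP; intros HnA; apply Hbad.
    apply (divisible_ext (fun _ => False)); [|exact divisible_empty].
    intros z; split; [tauto|intros _].
    destruct (Hcov 0%nat z) as [a _]; exact (HnA (inhabits a)). }
  set (bad_piece := fun k (Rg : Z -> Prop) a =>
         In a (pieces k) /\ ~ divisible (fun z => Rg z /\ reg k a z)).
  assert (Hstep : forall k Rg, ~ divisible Rg -> exists a, bad_piece k Rg a).
  { intros k Rg HRg; apply NNPP; intros Hn; apply HRg.
    apply (divisible_split (reg k) (pieces k)); auto.
    intros a Ha; apply NNPP; intros Ha'; apply Hn; exists a; split; auto. }
  set (stage := fix stage k : Z -> Prop :=
         match k with
         | O => fun _ => True
         | S k => fun z => stage k z /\ reg k (epsilon HA (bad_piece k (stage k))) z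
         end).
  set (c := fun k => epsilon HA (bad_piece k (stage k))).
  assert (Hc : forall k, ~ divisible (stage k) -> bad_piece k (stage k) (c k)).
  { intros k Hk; apply epsilon_spec, Hstep, Hk. }
  assert (Hstage_bad : forall k, ~ divisible (stage k)).
  { induction k as [|k IH]; [exact Hbad|exact (proj2 (Hc k IH))]. }
  assert (Hstage : forall m z, stage m z <-> forall k, (k < m)%nat -> reg k (c k) z).
  { induction m as [|m IH]; intros z; simpl.
    - split; [intros _ k Hk; lia|auto].
    - fold (c m); rewrite IH; split.
      + intros [Hlt Hm] k Hk.
        destruct (Nat.eq_dec k m) as [->|Hne]; [exact Hm|apply Hlt; lia].
      + intros Hle; split; [intros k Hk; apply Hle; lia|apply Hle; lia]. }
  destruct (Hbranch c (fun k => proj1 (Hc k (Hstage_bad k)))) as [m Hm].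
  apply (Hstage_bad m); revert Hm; apply divisible_ext.
  intros z; symmetry; apply Hstage.
Qed.

End Divisions.

Arguments divisible {Z C} inC okC Rg.
Arguments disjoint_cells {Z C} inC a b.
Arguments divisible_ext {Z C inC okC} R1 R2.
Arguments divisible_cell {Z C inC okC} c.
Arguments divisible_union {Z C inC okC} A B.
Arguments koenig_divisible {Z C inC okC A} pieces reg.

Definition in_tagged_cellR (r : R) (c : Rbar * cellR) : Prop := in_cellR r (snd c).

Definition fine_tagged_cellR (d : Rbar -> R) (c : Rbar * cellR) : Prop :=
  cellR_ok (snd c) /\ vertexR (fst c) (snd c) /\ fineR d (fst c) (snd c).

Section Cousin.
Variables (d : Rbar -> R) (d_pos : forall y, 0 < d y).

Definition divisible_below (b : R) : Prop :=
  divisible in_tagged_cellR (fine_tagged_cellR d) (fun r => r <= b).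

Lemma divisible_below_start : divisible_below (- / d NInf - 1).
Proof.
  apply (divisible_ext (fun r => in_tagged_cellR r (NInf, Iinf (- / d NInf - 1)))).
  - intros r; reflexivity.
  - apply divisible_cell; repeat split; simpl; auto; lra.
Qed.

Lemma divisible_below_extend (b b' : R) (y : Rbar) :
  divisible_below b -> b < b' -> fine_tagged_cellR d (y, Ioc b b') ->
  divisible_below b'.
Proof.
  intros Hb Hbb' Hcell.
  apply (divisible_ext (fun r => r <= b \/ in_tagged_cellR r (y, Ioc b b'))).
  - intros r; unfold in_tagged_cellR; simpl; split; [lra|].
    intros Hr; destruct (Rle_dec r b); [left|right]; lra.
  - apply divisible_union; [exact Hb|apply divisible_cell, Hcell|].
    intros r; unfold in_tagged_cellR; simpl; lra.
Qed.

(* If the divisible half-lines were bounded, their supremum s would be reached,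
   and passed, by cells tagged at s of length < d s. *)
Lemma divisible_below_unbounded (M : R) : exists b, M < b /\ divisible_below b.
Proof.
  apply NNPP; intros HM.
  assert (Hbound : bound divisible_below).
  { exists M; intros b Hb; apply Rnot_lt_le; intros Hlt; apply HM; eauto. }
  destruct (completeness _ Hbound (ex_intro _ _ divisible_below_start)) as [s [Hub Hlub]].
  pose proof (d_pos (Fin s)) as Hds.
  assert (Hnear : exists b, s - d (Fin s) < b /\ divisible_below b).
  { apply NNPP; intros Hn; enough (s <= s - d (Fin s)) by lra.
    apply Hlub; intros b Hb; apply Rnot_lt_le; intros Hlt; apply Hn; eauto. }
  destruct Hnear as [b [Hsb Hb]].
  assert (Hs : divisible_below s).
  { destruct (Rle_lt_dec s b).
    - replace s with b by (pose proof (Hub b Hb); lra); exact Hb.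
    - apply (divisible_below_extend b s (Fin s)); auto.
      repeat split; simpl; auto; lra. }
  assert (Hbeyond : divisible_below (s + d (Fin s) / 2)).
  { apply (divisible_below_extend s _ (Fin s)); [exact Hs|lra|].
    repeat split; simpl; auto; lra. }
  pose proof (Hub _ Hbeyond); lra.
Qed.

Lemma cousin_R : divisible in_tagged_cellR (fine_tagged_cellR d) (fun _ => True).
Proof.
  destruct (divisible_below_unbounded (/ d PInf)) as [b [Hb Hdiv]].
  apply (divisible_ext (fun r => r <= b \/ in_tagged_cellR r (PInf, Isup b))).
  - intros r; unfold in_tagged_cellR; simpl; split; auto; intros _.
    destruct (Rle_dec r b); [left|right]; lra.
  - apply divisible_union; [exact Hdiv| |].
    + apply divisible_cell; repeat split; simpl; auto.
    + intros r; unfold in_tagged_cellR; simpl; lra.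
Qed.

End Cousin.

(* A cell of the product [X -> Y] is a finite set of coordinates together with
   a cell of [Y] at every coordinate; only those at the listed coordinates
   constrain points, but all of them contribute to the tag seen by [required]. *)
Section Product.
Variables (X Y C0 : Type) (inC0 : Y -> C0 -> Prop) (okX : X -> C0 -> Prop).
Variables (f : nat -> X) (g : X -> nat).
Hypotheses (fK : forall x, f (g x) = x) (gK : forall k, g (f k) = k).
Hypothesis coordinate_divisible : forall x, divisible inC0 (okX x) (fun _ => True).
Variable required : (X -> C0) -> list X.

Definition in_prod_cell (z : X -> Y) (c : list X * (X -> C0)) : Prop :=
  forall x, In x (fst c) -> inC0 (z x) (snd c x).

Definition prod_cell_ok (c : list X * (X -> C0)) : Prop :=
  (forall x, In x (fst c) -> okX x (snd c x)) /\ incl (required (snd c)) (fst c).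

Lemma in_map_seq (x : X) (m : nat) : In x (map f (seq 0 m)) <-> (g x < m)%nat.
Proof.
  rewrite in_map_iff; split.
  - intros [k [<- Hk]]; rewrite gK; apply in_seq in Hk; lia.
  - intros Hx; exists (g x); split; [apply fK|apply in_seq; lia].
Qed.

Lemma divisible_product : divisible in_prod_cell prod_cell_ok (fun _ => True).
Proof.
  destruct (choice _ coordinate_divisible) as [Dx HDx].
  apply (koenig_divisible (fun k => Dx (f k))
           (fun k a z => inC0 (z (f k)) a)).
  - intros k; destruct (HDx (f k)) as [_ [Hdisj _]].
    exact (ForallOrdPairs_impl _ _ _ (fun a b H z => H (z (f k))) Hdisj).
  - intros k z; destruct (HDx (f k)) as [_ [_ Hcov]]; apply Hcov; exact I.
  - intros c Hc.
    set (cg := fun x => c (g x)).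
    set (m := S (list_max (map g (required cg)))).
    exists m.
    apply (divisible_ext (fun z => in_prod_cell z (map f (seq 0 m), cg))).
    + intros z; unfold in_prod_cell, cg; cbn [fst snd]; split.
      * intros Hz k Hk; specialize (Hz (f k)); rewrite gK in Hz.
        apply Hz, in_map_seq; rewrite gK; exact Hk.
      * intros Hz x Hx; rewrite <- (fK x) at 1; apply Hz, in_map_seq, Hx.
    + apply divisible_cell; split; cbn [fst snd].
      * intros x _; unfold cg; rewrite <- (fK x) at 1.
        destruct (HDx (f (g x))) as [Hok _]; apply Hok, Hc.
      * intros x Hx; apply in_map_seq.
        pose proof (le_list_max g _ _ Hx); unfold m; lia.
Qed.

End Product.

Arguments in_prod_cell {X Y C0} inC0 z c.
Arguments prod_cell_ok {X C0} okX required c.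

Lemma divisible_map {Z C C' : Type} (inC : Z -> C -> Prop) (okC : C -> Prop)
    (inC' : Z -> C' -> Prop) (okC' : C' -> Prop) (phi : C -> C') (Rg : Z -> Prop) :
  (forall z c, inC' z (phi c) <-> inC z c) -> (forall c, okC c -> okC' (phi c)) ->
  divisible inC okC Rg -> divisible inC' okC' Rg.
Proof.
  intros Hin Hok [D [HokD [Hdisj Hcov]]].
  exists (map phi D); split; [|split].
  - intros c' Hc'; apply in_map_iff in Hc' as [c [<- Hc]]; auto.
  - clear Hcov HokD; induction Hdisj as [|a l Ha Hl IH]; simpl; constructor; auto.
    apply Forall_map; refine (Forall_impl _ _ Ha).
    intros b Hab z Hza Hzb; apply (Hab z); apply Hin; assumption.
  - intros z; rewrite Hcov; split.
    + intros [c [Hc Hz]]; exists (phi c); split; [apply in_map, Hc|apply Hin, Hz].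
    + intros [c' [Hc' Hz]]; apply in_map_iff in Hc' as [c [<- Hc]].
      exists c; split; [exact Hc|apply Hin, Hz].
Qed.

Lemma divisionTP_of_divisible {T P : Type} (fine : (P -> T -> Rbar) -> cellTP T P -> Prop) :
  divisible (fun z (xI : (P -> T -> Rbar) * cellTP T P) => in_cellTP z (snd xI))
            (fun xI => (cellTP_ok (snd xI) /\ assocTP (fst xI) (snd xI)) /\
                       fine (fst xI) (snd xI))
            (fun _ => True) ->
  exists D : list ((P -> T -> Rbar) * cellTP T P),
    divisionTP D /\ (forall xI, In xI D -> fine (fst xI) (snd xI)).
Proof.
  intros [D [Hok [Hdisj Hcov]]]; exists D; split; [split; [|split]|].
  - intros xI HxI; apply Hok, HxI.
  - intros i j Hi Hj Hij d z Hzi Hzj.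
    refine (ForallOrdPairs_nth _ D d _ Hdisj i j Hi Hj Hij z Hzi Hzj).
    intros a b Hab w Hwb Hwa; exact (Hab w Hwa Hwb).
  - intros z; apply Hcov; exact I.
  - intros xI HxI; apply Hok, HxI.
Qed.

Definition coordinate_cell (T : Type) : Type := list T * (T -> Rbar * cellR).

Definition tagged_cellTP {T P : Type} (c : list P * (P -> coordinate_cell T)) :
    (P -> T -> Rbar) * cellTP T P :=
  (fun p t => fst (snd (snd c p) t),
   mkCellTP T P (fst c) (fun p => fst (snd c p)) (fun p t => snd (snd (snd c p) t))).

Section Tagging.
Variables (T P : Type) (L : (P -> T -> Rbar) -> list P)
  (Lp : P -> (T -> Rbar) -> list T) (delta : P -> T -> Rbar -> R).

Definition fine_coordinate_cell (p : P) : coordinate_cell T -> Prop :=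
  prod_cell_ok (fun t => fine_tagged_cellR (delta p t)) (fun c => Lp p (fun t => fst (c t))).

Definition fine_product_cell : list P * (P -> coordinate_cell T) -> Prop :=
  prod_cell_ok fine_coordinate_cell (fun c => L (fun p t => fst (snd (c p) t))).

Lemma in_cellTP_tagged (z : P -> T -> R) (c : list P * (P -> coordinate_cell T)) :
  in_cellTP z (snd (tagged_cellTP c)) <-> in_prod_cell (in_prod_cell in_tagged_cellR) z c.
Proof. split; intros Hz p t Hp Ht; exact (Hz p Hp t Ht). Qed.

Lemma tagged_cellTP_gamma_fine (c : list P * (P -> coordinate_cell T)) :
  fine_product_cell c ->
  (cellTP_ok (snd (tagged_cellTP c)) /\ assocTP (fst (tagged_cellTP c)) (snd (tagged_cellTP c))) /\
  gamma_fine L Lp delta (fst (tagged_cellTP c)) (snd (tagged_cellTP c)).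
Proof.
  intros [Hcoord HL].
  assert (Hfine : forall p t, In p (fst c) -> In t (fst (snd c p)) ->
            fine_tagged_cellR (delta p t) (snd (snd c p) t))
    by (intros p t Hp Ht; exact (proj1 (Hcoord p Hp) t Ht)).
  split; [split|split; [exact HL|split]].
  - intros p t Hp Ht; exact (proj1 (Hfine p t Hp Ht)).
  - intros p t Hp Ht; exact (proj1 (proj2 (Hfine p t Hp Ht))).
  - intros p Hp; exact (proj2 (Hcoord p Hp)).
  - intros p t Hp Ht; exact (proj2 (proj2 (Hfine p t Hp Ht))).
Qed.

End Tagging.

Theorem theorem7 (T P : Type)
  (HT : countably_infinite T) (HP : countably_infinite P)
  (L : (P -> T -> Rbar) -> list P)
  (Lp : P -> (T -> Rbar) -> list T)
  (delta : P -> T -> Rbar -> R)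
  (Hdelta : forall p t y, 0 < delta p t y) :
  exists D : list ((P -> T -> Rbar) * cellTP T P),
    divisionTP D /\
    (forall xI, In xI D -> gamma_fine L Lp delta (fst xI) (snd xI)).
Proof.
  destruct (countably_infinite_enum T HT) as [fT [gT [fTK gTK]]].
  destruct (countably_infinite_enum P HP) as [fP [gP [fPK gPK]]].
  assert (HRT : forall p, divisible (in_prod_cell in_tagged_cellR)
                            (fine_coordinate_cell T P Lp delta p) (fun _ => True)).
  { intros p; apply (divisible_product _ _ _ _ _ fT gT fTK gTK).
    intros t; apply cousin_R; intros y; apply Hdelta. }
  pose proof (divisible_product _ _ _ _ _ fP gP fPK gPK HRT
                (fun c => L (fun p t => fst (snd (c p) t)))) as HRTP.
  apply divisionTP_of_divisible; revert HRTP.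
  apply (divisible_map _ _ _ _ tagged_cellTP).
  - apply in_cellTP_tagged.
  - apply tagged_cellTP_gamma_fine.
Qed.
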